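(* The image of $\bar\rho_{A^\vee, \ell}\colon \mathrm{Gal}(\overline{\mathbb{Q}}/\mathbb{Q}) \to \mathrm{GL}_4(\mathbb{F}_{\ell})$ is given by the subgroup \[\left\{ \begin{pmatrix} d & 0 & 0 & 0 \\ -b_1 & a & 0 & 0 \\ z_1-z_2 & -w_1 & d & -w_2 \\ b_2 & 0 & 0 & a \end{pmatrix} \in \mathrm{M}_4(\mathbb{F}_\ell) : a, d \in \mathbb{F}_\ell^{\times},\ b_i,w_i,x_i\in \mathbb{F}_\ell \right\}\leqslant \mathrm{GL}_4(\mathbb{F}_\ell),\] where $z_1-z_2 = a^{-1}(b_1w_1-b_2w_2-dx_1+dx_2) \in \mathbb{F}_\ell$.
   Context: Let $\ell\leqslant 7$ be prime. Let $E_1,E_2$ be elliptic curves over $\mathbb{Q}$ with cyclic subgroups $C_1\leqslant E_1[\ell]$, $C_2\leqslant E_2[\ell]$ of order $\ell$, stable under $\mathrm{Gal}(\overline{\mathbb{Q}}/\mathbb{Q})$, with an isomorphism $c\colon C_1\xrightarrow{\sim} C_2$ of Galois modules. Let $A := (E_1\times E_2)/G$ where $G := \{(P,c(P)) : P\in C_1\}$, with quotient map $q$; $A$ is an abelian surface over $\mathbb{Q}$ and $A^\vee$ denotes its dual. Choose a basis $P_1,P_2,Q_1,Q_2$ of $T_\ell(E_1\times E_2)$ with $\{P_1,P_2\}$ a symplectic basis of $T_\ell E_1$, $\{Q_1,Q_2\}$ a symplectic basis of $T_\ell E_2$, $P_1 \bmod \ell$ generating $C_1$ and $Q_1\bmod\ell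 = c(P_1\bmod \ell)$ generating $C_2$. Assume the image of the $\ell$-adic representation $\rho_{E_1\times E_2,\ell}$ in this basis is the full group of block-diagonal matrices $\mathrm{diag}(A_1,A_2)$ with $A_i=\begin{pmatrix} a+x_i\ell & b_i+y_i\ell\\ w_i\ell & d+z_i\ell\end{pmatrix}$, where $a,d\in\{1,\dots,\ell-1\}$, $b_i\in\{0,\dots,\ell-1\}$, $w_i,x_i,y_i,z_i\in\mathbb{Z}_\ell$, subject to $\det A_1=\det A_2$ (infinitely many such pairs exist). Use the basis of $T_\ell A$ given by the columns of the change of basis matrix $\begin{pmatrix} 1 & 0 & 1/\ell & 0 \\ 0 & 1 & 0 & 0 \\ 0 & 0 & 1/\ell & 0 \\ 0 & 0 & 0 & 1\end{pmatrix}$ inside $V_\ell(E_1\times E_2)$; in this basis the image of $\bar\rho_{A,\ell}$ consists of the matrices $\begin{pmatrix} a & b_1 & x_1-x_2 & -b_2 \\ 0 & d & w_1 & 0 \\ 0 & 0 & a & 0 \\ 0 & 0 & w_2 & d \end{pmatrix}$ with $a,d\in\mathbb{F}_\ell^\times$, $b_i,w_i,x_i\in\mathbb{F}_\ell$. Take the basis of $A^\vee[\ell]$ dual to that of $A[\ell]$ under the Weil pairing, so that $\bar\rho_{A^\vee,\ell}\cong\bar\rho_{A,\ell}^{*}\otimes\varepsilon_\ell$ (contragredient twisted by the mod $\ell$ cyclotomic character, which acts by multiplication by $ad$). *)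

From HB Require Import structures.
From mathcomp Require Import all_boot all_order all_algebra.
Set Implicit Arguments. Unset Strict Implicit. Unset Printing Implicit Defensive.
Import Order.TTheory GRing.Theory Num.Theory.
Local Open Scope ring_scope.

Definition mx4 (R : nzRingType) (rows : seq (seq R)) : 'M[R]_4 :=
  \matrix_(i < 4, j < 4) nth 0 (nth [::] rows i) j.

(* Image of rho-bar_{A,l} in the chosen basis of A[l] (given in the paper). *)
Definition rhoA_mat (F : fieldType) (a d b1 b2 w1 w2 x1 x2 : F) : 'M[F]_4 :=
  mx4 [:: [:: a; b1; x1 - x2; - b2];
          [:: 0; d;  w1;      0];
          [:: 0; 0;  a;       0];
          [:: 0; 0;  w2;      d]].

(* The mod-l cyclotomic character on the element rhoA_mat a d ... is a*d;
   the dual representation in the Weil-dual basis is the contragredient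
   (M^{-1})^T twisted by the cyclotomic character. *)
Definition rhoAdual_mat (F : fieldType) (a d b1 b2 w1 w2 x1 x2 : F) : 'M[F]_4 :=
  (a * d) *: (invmx (rhoA_mat a d b1 b2 w1 w2 x1 x2))^T.

Definition target_mat (F : fieldType) (a d b1 b2 w1 w2 x1 x2 : F) : 'M[F]_4 :=
  let z := a^-1 * (b1 * w1 - b2 * w2 - d * x1 + d * x2) in
  mx4 [:: [:: d;    0;    0; 0];
          [:: - b1; a;    0; 0];
          [:: z;    - w1; d; - w2];
          [:: b2;   0;    0; a]].

(* Writing M for [rhoA_mat a d ...] and T for [target_mat a d ...], a direct
   computation gives M^T T = ad I, so the Weil dual ad (M^-1)^T is exactly T.
   Hence both families are parametrised by the same tuples (a, d, b_i, w_i, x_i),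
   over any field. *)

From HB Require Import structures.
From mathcomp Require Import all_boot all_order all_algebra.
From mathcomp Require Import ring.
Import GRing.Theory.
Local Open Scope ring_scope.

Lemma scale_trmx_invmx_eq (F : fieldType) (n : nat) (c : F) (A B : 'M[F]_n) :
  c != 0 -> A^T *m B = c%:M -> c *: (invmx A)^T = B.
Proof.
move=> c0 AtB; rewrite trmx_inv.
have AtB' : A^T *m (c^-1 *: B) = 1%:M.
  by rewrite -scalemxAr AtB scale_scalar_mx mulVf.
have [At_unit _] := mulmx1_unit AtB'.
have -> : invmx A^T = c^-1 *: B.
  by rewrite -[invmx _]mulmx1 -AtB' mulmxA mulVmx // mul1mx.
by rewrite scalerA mulfV // scale1r.
Qed.

Lemma trmx_rhoA_mul_target (F : fieldType) (a d b1 b2 w1 w2 x1 x2 : F) :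
  a != 0 ->
  (rhoA_mat a d b1 b2 w1 w2 x1 x2)^T *m target_mat a d b1 b2 w1 w2 x1 x2
  = (a * d)%:M.
Proof.
move=> a0; apply/matrixP => i j.
rewrite !mxE !big_ord_recr big_ord0 /= !mxE /=.
case: i => [[|[|[|[|i]]]] Hi] //; case: j => [[|[|[|[|j]]]] Hj] //=;
  rewrite ?mulr1n ?mulr0n; field=> //.
Qed.

Lemma rhoAdual_matE (F : fieldType) (a d b1 b2 w1 w2 x1 x2 : F) :
  a != 0 -> d != 0 ->
  rhoAdual_mat a d b1 b2 w1 w2 x1 x2 = target_mat a d b1 b2 w1 w2 x1 x2.
Proof.
move=> a0 d0; apply: scale_trmx_invmx_eq; first by rewrite mulf_neq0.
exact: trmx_rhoA_mul_target.
Qed.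

Theorem proposition3p10 (l : nat) (hl : prime l) (hl7 : (l <= 7)%N) (N : 'M['F_l]_4) :
  (exists a d b1 b2 w1 w2 x1 x2 : 'F_l,
      [/\ a != 0, d != 0 & N = rhoAdual_mat a d b1 b2 w1 w2 x1 x2]) <->
  (exists a d b1 b2 w1 w2 x1 x2 : 'F_l,
      [/\ a != 0, d != 0 & N = target_mat a d b1 b2 w1 w2 x1 x2]).
Proof.
split=> -[a [d [b1 [b2 [w1 [w2 [x1 [x2 [a0 d0 ->]]]]]]]]];
  exists a, d, b1, b2, w1, w2, x1, x2; split=> //; by rewrite rhoAdual_matE.
Qed.
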